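(* Let $\underline m=(m_i)_{i\ge1}$ be a sequence of positive integers, $M_j=m_1+\dots+m_j$ ($M_0=0$), let $n\ge1$, and let $\psi:\mathbb Z_p\to\mathbb C_p^\times$ be an additive character of conductor $p^{M_{n-1}+k}$ with $1\le k\le m_n$ (so $\psi$ may be viewed as a character of $\mathbb Z/p^{M_n}$). Consider the function $F:\prod_{i=1}^n\mathbb Z/p^{m_i}\to\mathbb C_p^\times$, $F(a)=\psi(d_{n,\underline m}(a))$. For $\chi=(\chi_1,\ldots,\chi_n)\in\prod_{i=1}^n\widehat{\mathbb Z/p^{m_i}}$, the Fourier coefficient $\langle F,\chi\rangle$ is zero unless $\chi_n(a)=\psi(p^{M_{n-1}}a)$ for all $a\in\mathbb Z/p^{m_n}$, in which case $$\langle F,\chi\rangle=p^{m_n}\prod_{i=1}^{n-1}\frac{\psi(p^{M_i})-1}{\psi(p^{M_{i-1}})\overline{\chi_i}(1)-1}.$$ In particular all nonzero Fourier coefficients of $F$ have the same $p$-adic valuation.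
   Context: Digit map: for $a\in\mathbb Z/p^{m}$ let $\tilde a\in\{0,\ldots,p^{m}-1\}$ be its representative. The bijection of sets $d_{n,\underline m}:\prod_{i=1}^n\mathbb Z/p^{m_i}\to\mathbb Z/p^{M_n}$ is $(a_i)_i\mapsto\sum_{i=1}^n\tilde a_ip^{M_{i-1}}\bmod p^{M_n}$. For a finite abelian group $G$, $\widehat G$ is the group of characters $G\to\mathbb C_p^\times$, and for $f:G\to\mathbb C_p$ and $\chi\in\widehat G$, $\langle f,\chi\rangle=\sum_{g\in G}f(g)\overline{\chi}(g)$, where $\overline\chi=\chi^{-1}$. *)

From HB Require Import structures.
From mathcomp Require Import all_boot all_order all_algebra.
Set Implicit Arguments. Unset Strict Implicit. Unset Printing Implicit Defensive.
Import Order.TTheory GRing.Theory Num.Theory.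
Local Open Scope ring_scope.

Definition is_char (G : zmodType) (K : fieldType) (f : G -> K) : Prop :=
  (forall a b, f (a + b) = f a * f b) /\ (forall a, f a != 0).

(* M_j = m_1 + ... + m_j  (the sequence m is indexed from 1). *)
Definition Mpart (m : nat -> nat) (j : nat) : nat := (\sum_(i < j) m i.+1)%N.

(* The product prod_{i=1}^N Z/p^{m_i}; index i : 'I_N stands for i+1. *)
Notation prodZ p m N := {dffun forall i : 'I_N, 'Z_(p ^ m i.+1)}.

Definition digit (p : nat) (m : nat -> nat) (N : nat) (a : prodZ p m N)
  : 'Z_(p ^ Mpart m N) :=
  ((\sum_(i < N) (a i : nat) * p ^ Mpart m i)%N)%:R.

Definition Ffun (p : nat) (m : nat -> nat) (N : nat) (K : fieldType)
  (psi : 'Z_(p ^ Mpart m N) -> K) (a : prodZ p m N) : K := psi (digit a).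

(* <f, chi> = sum_g f(g) * conj(chi)(g), with chi = (chi_1,...,chi_N),
   chi(a) = prod_i chi_i(a_i), conj(chi) = chi^{-1}. *)
Definition fcoef (p : nat) (m : nat -> nat) (N : nat) (K : fieldType)
  (f : prodZ p m N -> K) (chi : forall i : 'I_N, 'Z_(p ^ m i.+1) -> K) : K :=
  \sum_(a : prodZ p m N) f a * \prod_(i < N) (chi i (a i))^-1.

(* A non-archimedean absolute value on K which is p-adic (|p| < 1);
   "same p-adic valuation" is rendered as "same such absolute value". *)
Definition is_padic_abs (p : nat) (K : fieldType) (R : realFieldType)
  (v : K -> R) : Prop :=
  [/\ v 0 = 0, (forall x, x != 0 -> 0 < v x),
      (forall x y, v (x * y) = v x * v y),
      (forall x y, v (x + y) <= Num.max (v x) (v y)) & v p%:R < 1].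

From HB Require Import structures.
From mathcomp Require Import all_boot all_order all_algebra zify.
Import Order.TTheory GRing.Theory Num.Theory.
Local Open Scope ring_scope.
Set Implicit Arguments. Unset Strict Implicit.

(* Writing [psi x = w ^+ x] and [chi_i x = c_i ^+ x], the summand of <F, chi>
   factors as prod_i r_i ^+ a_i with r_i = w ^+ p ^ M_{i-1} / c_i, so <F, chi>
   is a product of geometric sums over j < p ^ m_i.  For i < n the ratio r_i is
   a root of unity of order p ^ (M_{n-1} + k - M_{i-1}), hence r_i != 1 and the
   i-th sum is (psi (p ^ M_i) - 1) / (r_i - 1); for i = n one has
   r_n ^+ p ^ m_n = 1, so the last sum vanishes unless r_n = 1.  Since r_i is a
   primitive root of unity of an order independent of chi, the absolute value
   of r_i - 1 does not depend on chi, and neither does that of <F, chi>. *)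

Section CharactersZp.
Variables (s : nat) (K : fieldType) (f : 'Z_s -> K).
Hypothesis f_char : is_char f.

Lemma is_char0 : f 0 = 1.
Proof.
have [fD fN] := f_char; apply: (mulfI (fN 0)).
by rewrite -fD addr0 mulr1.
Qed.

Lemma is_char_natr (a : nat) : f a%:R = f 1 ^+ a.
Proof.
elim: a => [|a IHa]; first by rewrite is_char0.
by rewrite -addn1 natrD (proj1 f_char) IHa exprD expr1.
Qed.

Lemma is_charE (x : 'Z_s) : f x = f 1 ^+ x.
Proof. by rewrite -is_char_natr natr_Zp. Qed.

Lemma is_char_expr_modulus : (1 < s)%N -> f 1 ^+ s = 1.
Proof. by move=> s_gt1; rewrite -is_char_natr pchar_Zp // is_char0. Qed.

End CharactersZp.

Lemma sum_Zp (s : nat) (R : nzRingType) (F : nat -> R) : (1 < s)%N ->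
  \sum_(x : 'Z_s) F x = \sum_(j < s) F j.
Proof.
move=> s_gt1; transitivity (\sum_(0 <= j < (Zp_trunc s).+2) F j).
  by rewrite big_mkord.
by rewrite Zp_cast // big_mkord.
Qed.

Lemma sum_expr_geometric (K : fieldType) (r : K) (s : nat) : r != 1 ->
  \sum_(j < s) r ^+ j = (r ^+ s - 1) / (r - 1).
Proof. by move=> r_neq1; rewrite subrX1 [(r - 1) * _]mulrC mulfK // subr_eq0. Qed.

Lemma sum_dffun_prod (R : comNzRingType) (I : finType) (T_ : I -> finType)
    (F : forall i, T_ i -> R) :
  \sum_(f : {dffun forall i, T_ i}) \prod_i F i (f i) =
  \prod_i \sum_(x : T_ i) F i x.
Proof.
pose P_ i := [ffun x : T_ i => F i x].
transitivity (\prod_i \sum_(x : T_ i) P_ i x); last first.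
  by apply: eq_bigr => i _; apply: eq_bigr => x _; rewrite ffunE.
under eq_bigr => i _ do rewrite (big_tag (fun i x => P_ i x) i).
rewrite bigA_distr_big_dep -(big_fprod _ _ P_).
rewrite (reindex (@fprod_of_dffun I T_)); last exact/onW_bij/fprod_of_dffun_bij.
by apply: eq_bigr => f _; apply: eq_bigr => i _; rewrite /P_ ffunE fprodE.
Qed.

Lemma MpartS (m : nat -> nat) (i : nat) : Mpart m i.+1 = (Mpart m i + m i.+1)%N.
Proof. by rewrite /Mpart big_ord_recr. Qed.

Lemma leq_Mpart (m : nat -> nat) (i j : nat) :
  (i <= j)%N -> (Mpart m i <= Mpart m j)%N.
Proof.
move=> /subnKC <-; elim: (j - i)%N => [|d IHd]; first by rewrite addn0.
by rewrite addnS MpartS (leq_trans IHd) // leq_addr.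
Qed.

Lemma prime_power_primitive_root (K : fieldType) (p e : nat) (z : K) :
  prime p -> z ^+ (p ^ e.+1) = 1 -> z ^+ (p ^ e) != 1 ->
  (p ^ e.+1).-primitive_root z.
Proof.
move=> p_pr z_pe1 z_pe.
have pe1_gt0 : (0 < p ^ e.+1)%N by rewrite expn_gt0 prime_gt0.
have [d z_d /(dvdn_pfactor _ _ p_pr) [f le_f_e1 def_d]] :=
  prim_order_exists pe1_gt0 z_pe1.
rewrite def_d in z_d.
suff def_f : f = e.+1 by rewrite -def_f.
apply/eqP; rewrite eqn_leq le_f_e1 ltnNge; apply: contra z_pe => le_f_e.
by rewrite (expr_dvd (prim_expr_order z_d)) // dvdn_exp2l.
Qed.

Section NonArchimedeanAbs.
Variables (K : fieldType) (R : realFieldType) (v : K -> R).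
Hypotheses (abs0 : v 0 = 0) (abs_gt0 : forall x, x != 0 -> 0 < v x)
  (absM : forall x y, v (x * y) = v x * v y)
  (abs_max : forall x y, v (x + y) <= Num.max (v x) (v y)).

Lemma abs1 : v 1 = 1.
Proof.
have v1_gt0 : 0 < v 1 by apply: abs_gt0; exact: oner_neq0.
by apply: (mulIf (lt0r_neq0 v1_gt0)); rewrite -absM !mul1r.
Qed.

Lemma abs_ge0 x : 0 <= v x.
Proof. by have [->|/abs_gt0/ltW //] := eqVneq x 0; rewrite abs0. Qed.

Lemma absX x j : v (x ^+ j) = v x ^+ j.
Proof. by elim: j => [|j IHj]; rewrite ?abs1 // !exprS absM IHj. Qed.

Lemma absV x : v x^-1 = (v x)^-1.
Proof.
have [->|x_neq0] := eqVneq x 0; first by rewrite invr0 abs0 invr0.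
apply: (mulfI (lt0r_neq0 (abs_gt0 x_neq0))).
by rewrite -absM divff // abs1 divff // lt0r_neq0 // abs_gt0.
Qed.

Lemma abs_unity_root (x : K) N : (0 < N)%N -> x ^+ N = 1 -> v x = 1.
Proof.
move=> N_gt0 xN1; have x_neq0 : x != 0.
  apply: contraPneq xN1 => ->; rewrite expr0n eqn0Ngt N_gt0 /=.
  by move/eqP; rewrite eq_sym oner_eq0.
apply/eqP; rewrite -(pexpr_eq1 N_gt0 (abs_ge0 x)).
by rewrite -absX xN1 abs1.
Qed.

Lemma abs_sum_le1 (I : Type) (r : seq I) (P : pred I) (F : I -> K) :
  (forall i, P i -> v (F i) <= 1) -> v (\sum_(i <- r | P i) F i) <= 1.
Proof.
move=> F_le1; apply: (big_ind (fun y => v y <= 1)) => //; first by rewrite abs0.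
by move=> x y vx vy; apply: le_trans (abs_max x y) _; rewrite ge_max vx vy.
Qed.

(* x = z ^+ j, and x - 1 = (z - 1) * sum_(i < j) z ^+ i where the sum of
   roots of unity has absolute value at most 1. *)
Lemma abs_unity_root_sub1_le (z x : K) N : N.-primitive_root z ->
  x ^+ N = 1 -> v (x - 1) <= v (z - 1).
Proof.
move=> z_prim xN1; have [j ->] := prim_rootP z_prim xN1.
rewrite subrX1 absM -[leRHS]mulr1 ler_wpM2l ?abs_ge0 //.
apply: abs_sum_le1 => i _; rewrite (abs_unity_root (prim_order_gt0 z_prim)) //.
by rewrite exprAC (prim_expr_order z_prim) expr1n.
Qed.

Lemma abs_primitive_root_sub1 (z x : K) N : N.-primitive_root z ->
  N.-primitive_root x -> v (x - 1) = v (z - 1).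
Proof.
move=> z_prim x_prim; apply/eqP; rewrite eq_le.
by rewrite !(abs_unity_root_sub1_le z_prim, abs_unity_root_sub1_le x_prim)
  ?prim_expr_order.
Qed.

End NonArchimedeanAbs.

Section FourierCoefficients.
Variables (p : nat) (m : nat -> nat) (n k : nat) (K : fieldType)
  (psi : 'Z_(p ^ Mpart m n.+1) -> K).
Hypotheses (p_pr : prime p) (m_gt0 : forall i, (0 < i)%N -> (0 < m i)%N)
  (k_range : (1 <= k <= m n.+1)%N) (psi_char : is_char psi)
  (psi_cond : psi (p ^ (Mpart m n + k))%N%:R = 1)
  (psi_cond' : psi (p ^ (Mpart m n + k).-1)%N%:R != 1).

Lemma pm_gt1 (i : nat) : (1 < p ^ m i.+1)%N.
Proof. by rewrite -{1}(expn0 p) ltn_exp2l ?prime_gt1 ?m_gt0. Qed.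

Let w := psi 1.

Lemma psi_natr (a : nat) : psi a%:R = w ^+ a.
Proof. exact: is_char_natr. Qed.

Lemma w_expp_eq1 t : (Mpart m n + k <= t)%N -> w ^+ (p ^ t) = 1.
Proof. by move=> le_t; rewrite (expr_dvd _ (dvdn_exp2l p le_t)) // -psi_natr. Qed.

Lemma w_expp_neq1 t : (t < Mpart m n + k)%N -> w ^+ (p ^ t) != 1.
Proof.
move=> lt_t; apply: contra psi_cond' => /eqP wt1; rewrite psi_natr.
by rewrite (expr_dvd wt1) // dvdn_exp2l // -ltnS prednK // (leq_ltn_trans _ lt_t).
Qed.

Definition fourier_ratio (chi : forall i : 'I_n.+1, 'Z_(p ^ m i.+1) -> K)
    (i : 'I_n.+1) : K :=
  w ^+ (p ^ Mpart m i) * (chi i 1)^-1.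

Lemma fcoef_prod_geometric (chi : forall i : 'I_n.+1, 'Z_(p ^ m i.+1) -> K) :
  (forall i, is_char (chi i)) ->
  fcoef (Ffun psi) chi =
  \prod_(i < n.+1) \sum_(j < p ^ m i.+1) fourier_ratio chi i ^+ j.
Proof.
move=> chi_char; rewrite /fcoef /Ffun /digit.
transitivity (\prod_(i < n.+1)
    \sum_(x : 'Z_(p ^ m i.+1)) fourier_ratio chi i ^+ x); last first.
  by apply: eq_bigr => i _; rewrite (sum_Zp (fun j => _ ^+ j)) ?pm_gt1.
rewrite -(sum_dffun_prod
  (fun (i : 'I_n.+1) (x : 'Z_(p ^ m i.+1)) => fourier_ratio chi i ^+ x)).
apply: eq_bigr => a _.
rewrite psi_natr (big_morph (fun t => w ^+ t) (exprD w) (expr0 w)) -big_split /=.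
apply: eq_bigr => i _.
by rewrite (is_charE (chi_char i)) -exprVn exprMn -!exprM mulnC.
Qed.

Section FixedCharacter.
Variable chi : forall i : 'I_n.+1, 'Z_(p ^ m i.+1) -> K.
Arguments chi : clear implicits.
Hypothesis chi_char : forall i : 'I_n.+1, is_char (chi i).

Lemma fourier_ratio_expp (i : 'I_n.+1) t : (m i.+1 <= t)%N ->
  fourier_ratio chi i ^+ (p ^ t) = w ^+ (p ^ (Mpart m i + t)).
Proof.
move=> le_t; rewrite exprMn exprVn.
have chi_i_mod := is_char_expr_modulus (chi_char i) (pm_gt1 i).
rewrite (expr_dvd chi_i_mod (dvdn_exp2l p le_t)).
by rewrite invr1 mulr1 -exprM -expnD.
Qed.

Let chi_init (i : 'I_n) := fourier_ratio chi (widen_ord (leqnSn n) i).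

Lemma fourier_ratio_primitive (i : 'I_n) :
  (p ^ ((Mpart m n + k).-1 - Mpart m i).+1).-primitive_root (chi_init i).
Proof.
have le_Mi := leq_Mpart m (ltn_ord i); have Mi1 := MpartS m i.
have [k_gt0 _] := andP k_range.
apply: prime_power_primitive_root => //; rewrite fourier_ratio_expp /=; try lia.
  by apply: w_expp_eq1; lia.
by apply: w_expp_neq1; lia.
Qed.

Lemma fourier_ratio_neq1 (i : 'I_n) : chi_init i != 1.
Proof.
rewrite -[chi_init i]expr1 -(prim_order_dvd (fourier_ratio_primitive i)).
by rewrite dvdn1 -(expn0 p) eqn_exp2l ?prime_gt1.
Qed.

Lemma sum_fourier_ratio_init (i : 'I_n) :
  \sum_(j < p ^ m i.+1) chi_init i ^+ j =
  (w ^+ (p ^ Mpart m i.+1) - 1) / (chi_init i - 1).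
Proof.
rewrite sum_expr_geometric ?fourier_ratio_neq1 //.
by rewrite /chi_init fourier_ratio_expp //= -MpartS.
Qed.

Lemma sum_fourier_ratio_last : fourier_ratio chi ord_max != 1 ->
  \sum_(j < p ^ m n.+1) fourier_ratio chi ord_max ^+ j = 0.
Proof.
move=> r_neq1; rewrite sum_expr_geometric // fourier_ratio_expp //= -MpartS.
by rewrite w_expp_eq1 ?subrr ?mul0r // MpartS leq_add2l; case/andP: k_range.
Qed.

Lemma fourier_ratio_last_eq1 :
  fourier_ratio chi ord_max = 1 <->
  forall a, chi ord_max a = psi (p ^ Mpart m n * a)%N%:R.
Proof.
have c_neq0 : chi ord_max 1 != 0 by have [] := chi_char ord_max.
split=> [r1 a | chiE].
  rewrite psi_natr (is_charE (chi_char ord_max)) exprM.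
  by rewrite -[chi _ 1]mul1r -r1 mulfVK.
have val1 : nat_of_ord (1 : 'Z_(p ^ m n.+1)) = 1%N.
  by have := val_Zp_nat (pm_gt1 n) 1; rewrite modn_small ?pm_gt1.
rewrite /fourier_ratio chiE val1 muln1 psi_natr divff //.
by apply: expf_neq0; exact: (proj2 psi_char).
Qed.

Lemma fcoef_eq0 : fourier_ratio chi ord_max != 1 -> fcoef (Ffun psi) chi = 0.
Proof.
move=> r_neq1.
by rewrite fcoef_prod_geometric // big_ord_recr /= sum_fourier_ratio_last ?mulr0.
Qed.

Lemma fcoef_eq_prod_init : fourier_ratio chi ord_max = 1 ->
  fcoef (Ffun psi) chi =
  (p ^ m n.+1)%N%:R * \prod_(i < n) \sum_(j < p ^ m i.+1) chi_init i ^+ j.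
Proof.
move=> r1; rewrite fcoef_prod_geometric // big_ord_recr /= r1 mulrC.
by under eq_bigr do rewrite expr1n; rewrite sumr_const card_ord.
Qed.

Lemma fcoef_eq : fourier_ratio chi ord_max = 1 ->
  fcoef (Ffun psi) chi =
  (p ^ m n.+1)%N%:R *
  \prod_(i < n) ((psi (p ^ Mpart m i.+1)%N%:R - 1) /
                 (psi (p ^ Mpart m i)%N%:R *
                    (chi (widen_ord (leqnSn n) i) 1)^-1 - 1)).
Proof.
move=> r1; rewrite fcoef_eq_prod_init //; congr (_ * _).
by apply: eq_bigr => i _; rewrite sum_fourier_ratio_init !psi_natr.
Qed.

Lemma fourier_ratio_last_eq1_fcoef : fcoef (Ffun psi) chi != 0 ->
  fourier_ratio chi ord_max = 1.
Proof. by apply: contraNeq => /fcoef_eq0 ->; rewrite eqxx. Qed.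

End FixedCharacter.

Lemma abs_fcoef_eq (R : realFieldType) (v : K -> R) : is_padic_abs p v ->
  forall chi chi' : forall i : 'I_n.+1, 'Z_(p ^ m i.+1) -> K,
  (forall i, is_char (chi i)) -> (forall i, is_char (chi' i)) ->
  fcoef (Ffun psi) chi != 0 -> fcoef (Ffun psi) chi' != 0 ->
  v (fcoef (Ffun psi) chi) = v (fcoef (Ffun psi) chi').
Proof.
move=> [abs0 abs_gt0 absM abs_max _] chi chi' chi_char chi'_char F_chi F_chi'.
rewrite !fcoef_eq_prod_init ?fourier_ratio_last_eq1_fcoef //.
rewrite !absM !(big_morph v absM (abs1 abs_gt0 absM)).
congr (_ * _); apply: eq_bigr => i _.
rewrite !sum_fourier_ratio_init // !absM !(absV abs0 abs_gt0 absM).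
by rewrite (abs_primitive_root_sub1 abs0 abs_gt0 absM abs_max
  (fourier_ratio_primitive chi_char i) (fourier_ratio_primitive chi'_char i)).
Qed.

End FourierCoefficients.

Theorem lemma3p2 (p : nat) (m : nat -> nat) (n k : nat) (K : fieldType)
  (psi : 'Z_(p ^ Mpart m n.+1) -> K) :
  prime p ->
  (forall i, 0 < i -> 0 < m i)%N ->
  (1 <= k <= m n.+1)%N ->
  is_char psi ->
  psi ((p ^ (Mpart m n + k))%N%:R) = 1 ->
  psi ((p ^ (Mpart m n + k).-1)%N%:R) != 1 ->
  (forall chi : forall i : 'I_n.+1, 'Z_(p ^ m i.+1) -> K,
     (forall i, is_char (chi i)) ->
     ((~ (forall a : 'Z_(p ^ m n.+1),
            chi ord_max a = psi ((p ^ Mpart m n * a)%N%:R))) ->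
        fcoef (Ffun psi) chi = 0) /\
     ((forall a : 'Z_(p ^ m n.+1),
            chi ord_max a = psi ((p ^ Mpart m n * a)%N%:R)) ->
        fcoef (Ffun psi) chi =
          (p ^ m n.+1)%N%:R *
          \prod_(i < n)
             ((psi ((p ^ Mpart m i.+1)%N%:R) - 1) /
              (psi ((p ^ Mpart m i)%N%:R) * (chi (widen_ord (leqnSn n) i) 1)^-1 - 1))))
  /\
  (forall (R : realFieldType) (v : K -> R), is_padic_abs p v ->
     forall chi chi' : forall i : 'I_n.+1, 'Z_(p ^ m i.+1) -> K,
       (forall i, is_char (chi i)) -> (forall i, is_char (chi' i)) ->
       fcoef (Ffun psi) chi != 0 -> fcoef (Ffun psi) chi' != 0 ->
       v (fcoef (Ffun psi) chi) = v (fcoef (Ffun psi) chi')).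
Proof.
move=> p_pr m_gt0 k_range psi_char psi_cond psi_cond'.
split=> [chi chi_char | R v v_abs chi chi' chi_char chi'_char].
  have ratio_eq1 := fourier_ratio_last_eq1 p_pr m_gt0 psi_char chi_char.
  split=> [chi_neq | /ratio_eq1 r1].
    apply: (fcoef_eq0 p_pr m_gt0 k_range psi_char psi_cond chi_char).
    apply/negP => /eqP/ratio_eq1; exact: chi_neq.
  exact: (fcoef_eq p_pr m_gt0 k_range psi_char psi_cond psi_cond' chi_char r1).
exact: (abs_fcoef_eq p_pr m_gt0 k_range psi_char psi_cond psi_cond' v_abs
  chi_char chi'_char).
Qed.
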